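(* Let $f^-,f^+:\mathbb R\to\mathbb R$ be twice differentiable and consider the state coupling $\theta_-=\theta_+=\mathrm{Id}$, so that $w(u,v)=u$ and $f(w,v)=(1-v)f^-(w)+vf^+(w)$. Let $v\in L^\infty(\mathbb R)$ take values in $[0,1]$, and let $w_0\in L^\infty(\mathbb R)\cap BV(\mathbb R)$ be the initial datum. Let $0<\epsilon<\frac12$ and assume the strengthened CFL condition $$\frac{\Delta t}{\Delta x}\max_{|w|\le\|w_0\|_{L^\infty(\mathbb R)},\ 0\le v\le1}|\partial_wf(w,v)|\le\frac12-\epsilon.$$ Then the finite volume scheme described in the context, with the Godunov numerical flux, is total variation diminishing: $TV(w_{\Delta x}(t^{n+1},\cdot))\le TV(w_{\Delta x}(t^n,\cdot))$ for all $n$, and in particular $TV(w_{\Delta x}(t^n,\cdot))\le TV(w_0)$ for all $n$.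
   Context: Mesh $\Delta t,\Delta x>0$, $t^n=n\Delta t$, $x_j=j\Delta x$, $x_{j+1/2}=(j+1/2)\Delta x$. Set $w^0_j=\frac1{\Delta x}\int_{x_{j-1/2}}^{x_{j+1/2}}w_0$ and $v_{j+1/2}=\frac1{\Delta x}\int_{x_j}^{x_{j+1}}v$. Godunov flux: for $v\in[0,1]$, $g(a,b;v)=f(\omega(0^+;a,b,v),v)$, where $\omega(x/t;a,b,v)$ is the self-similar entropy solution of the Riemann problem $\partial_t\omega+\partial_xf(\omega,v)=0$ with $\omega(0,x)=a$ for $x<0$ and $b$ for $x>0$. Scheme (which here has $u^n_j=w^n_j$): reconstruction $w^n_{j-1/2,+}=w^n_{j+1/2,-}=w^n_j$, $w^n_{j+1/2,+}=w^n_{j+1}$; $g^n_{j+1/2}=g(w^n_j,w^n_{j+1};v_{j+1/2})$; $w^{n+1}_j=w^n_j-\frac{\Delta t}{\Delta x}\big((g^n_{j+1/2}-f(w^n_j,v_{j+1/2}))-(g^n_{j-1/2}-f(w^n_j,v_{j-1/2}))\big)$. The approximate solution is $w_{\Delta x}(t,x)=w^n_j$ for $x\in(x_{j-1/2},x_{j+1/2})$, $t\in[t^n,t^{n+1})$, and $TV$ denotes total variation on $\mathbb R$. *)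

From HB Require Import structures.
From mathcomp Require Import all_boot all_order all_algebra.
From mathcomp Require Import all_classical all_reals all_analysis.

Set Implicit Arguments.
Unset Strict Implicit.
Unset Printing Implicit Defensive.
Import Order.TTheory GRing.Theory Num.Theory.
Import numFieldNormedType.Exports.
Local Open Scope classical_set_scope.
Local Open Scope ring_scope.

Section Defs.
Variable R : realType.

Local Notation leb := (@lebesgue_measure R).

Definition TV_pointwise (f : R -> R) : \bar R :=
  ereal_sup [set total_variation ab.1 ab.2 f | ab in [set: R * R]].

(* Total variation on R of (the L^1_loc class of) f: the essential variation,
   i.e. the infimum of the pointwise variation over all a.e.-representatives. *)
Definition TV (f : R -> R) : \bar R :=
  ereal_inf [set TV_pointwise g | g in [set g : R -> R | {ae leb, forall x, g x = f x}]].

Definition Linfty (f : R -> R) : Prop :=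
  measurable_fun [set: R] f /\ exists M : R, {ae leb, forall x, `|f x| <= M}.

Definition Linfty_norm (f : R -> R) : R :=
  inf [set M : R | {ae leb, forall x, `|f x| <= M}].

Definition avg (dx a b : R) (f : R -> R) : R :=
  dx^-1 * Rintegral leb `[a, b] f.

Definition flux (fm fp : R -> R) (w v : R) : R := (1 - v) * fm w + v * fp w.

(* Godunov numerical flux for the scalar flux F := flux fm fp (.) v:
   g(a,b;v) = min_{a<=w<=b} F(w) if a <= b, max_{b<=w<=a} F(w) if a > b.
   (Closed form of f(omega(0+;a,b,v),v), omega the entropy Riemann solution.) *)
Definition godunov (fm fp : R -> R) (a b v : R) : R :=
  if a <= b then inf [set flux fm fp w v | w in `[a, b]]
  else sup [set flux fm fp w v | w in `[b, a]].

Definition xc (dx : R) (j : int) : R := j%:~R * dx.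
Definition xh (dx : R) (j : int) : R := (j%:~R + 2^-1) * dx.

Definition vh (dx : R) (v : R -> R) (j : int) : R := avg dx (xc dx j) (xc dx (j + 1)) v.

Definition w_init (dx : R) (w0 : R -> R) (j : int) : R :=
  avg dx (xh dx (j - 1)) (xh dx j) w0.

Definition step (fm fp : R -> R) (dt dx : R) (v : R -> R) (w : int -> R) (j : int) : R :=
  let gr := godunov fm fp (w j) (w (j + 1)) (vh dx v j) in
  let gl := godunov fm fp (w (j - 1)) (w j) (vh dx v (j - 1)) in
  w j - dt / dx * ((gr - flux fm fp (w j) (vh dx v j))
                   - (gl - flux fm fp (w j) (vh dx v (j - 1)))).

Fixpoint scheme (fm fp : R -> R) (dt dx : R) (v w0 : R -> R) (n : nat) : int -> R :=
  match n with
  | 0%N => w_init dx w0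
  | n'.+1 => step fm fp dt dx v (scheme fm fp dt dx v w0 n')
  end.

(* w_{dx}(t^n, x) = w^n_j for x in (x_{j-1/2}, x_{j+1/2}); the (measure-zero)
   values at the cell interfaces x_{j+1/2} are set to w^n_{j+1}. *)
Definition w_dx (fm fp : R -> R) (dt dx : R) (v w0 : R -> R) (n : nat) (x : R) : R :=
  scheme fm fp dt dx v w0 n (Num.floor (x / dx + 2^-1)).

End Defs.

(* The Godunov flux is monotone: by the mean value theorem and the CFL
   condition, F(a) - g(a,b) and F(b) - g(a,b) are multiples of b - a with
   factors in [0, 1/2].  One step of the scheme therefore has Harten's
   incremental form w'_j = w_j + al_j (w_{j+1} - w_j) - be_{j-1} (w_j - w_{j-1}),
   which is a convex combination of neighbouring values (so |w| <= ||w0||_oo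
   propagates and the CFL bound stays applicable) and does not increase the
   discrete variation sum_j |w_{j+1} - w_j|.  The total variation of the
   piecewise constant w_dx equals the discrete variation of its cell values,
   since every a.e.-representative attains each cell value inside the cell; and
   the cell averages of w0 have discrete variation at most TV(w0), since every
   average is approximated from above and below by values of any
   representative inside its cell. *)

From HB Require Import structures.
From mathcomp Require Import all_boot all_order all_algebra.
From mathcomp Require Import all_classical all_reals all_analysis.
From mathcomp Require Import ring lra zify.
Import Order.TTheory GRing.Theory Num.Theory.
Import numFieldNormedType.Exports.
Local Open Scope classical_set_scope.
Local Open Scope ring_scope.
Set Implicit Arguments.
Unset Strict Implicit.

Section GodunovIncrements.
Variable R : realType.

Lemma flux_derivable (fm fp : R -> R) (vv x : R) :
  (forall x, derivable fm x 1) -> (forall x, derivable fp x 1) ->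
  derivable (fun z => flux fm fp z vv) x 1.
Proof.
move=> dfm dfp.
have -> : (fun z => flux fm fp z vv) = ((1 - vv) \*: fm + vv \*: fp)%R.
  by apply: funext => z; rewrite /flux.
by apply: derivableD; apply: derivableZ.
Qed.

Lemma lipschitz_of_derive_bound (F : R -> R) (lam c N : R) :
  0 < lam -> (forall x, derivable F x 1) ->
  (forall w, `|w| <= N -> lam * `|derive1 F w| <= c) ->
  forall x y, `|x| <= N -> `|y| <= N -> lam * `|F y - F x| <= c * `|y - x|.
Proof.
move=> lam0 dF hF.
suff lt_case : forall x y, x < y -> `|x| <= N -> `|y| <= N ->
    lam * `|F y - F x| <= c * `|y - x|.
  move=> x y xN yN; case: (ltgtP x y) => [xy|yx|->]; first exact: lt_case.
    by rewrite distrC [`|y - x|]distrC; exact: lt_case.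
  by rewrite !subrr normr0 !mulr0.
move=> x y xy xN yN.
have [z zxy ->] := @MVT R F (derive1 F) x y xy
   (fun z _ => ltac:(rewrite derive1E; exact: derivableP))
   (derivable_within_continuous (fun z _ => dF z)).
have zN : `|z| <= N.
  move: zxy xN yN; rewrite in_itv /= !ler_norml => /andP[xz zy] /andP[? ?] /andP[? ?].
  by apply/andP; split; lra.
by rewrite normrM mulrA ler_pM2r ?hF // normr_gt0 subr_eq0 gt_eqF.
Qed.

Lemma inf_image_itv_bounds (F : R -> R) (K a b x0 : R) : x0 \in `[a, b] ->
  (forall w, w \in `[a, b] -> `|F w - F x0| <= K) ->
  F x0 - K <= inf [set F w | w in `[a, b]] <= F x0.
Proof.
move=> x0ab near_x0; apply/andP; split.
  apply: lb_le_inf; first by exists (F x0), x0.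
  move=> _ [w wab <-]; have := near_x0 w wab.
  by rewrite ler_norml => /andP[? _]; lra.
apply: ge_inf; last by exists x0.
exists (F x0 - K) => _ [w wab <-]; have := near_x0 w wab.
by rewrite ler_norml => /andP[? _]; lra.
Qed.

Lemma sup_image_itv_bounds (F : R -> R) (K a b x0 : R) : x0 \in `[a, b] ->
  (forall w, w \in `[a, b] -> `|F w - F x0| <= K) ->
  F x0 <= sup [set F w | w in `[a, b]] <= F x0 + K.
Proof.
move=> x0ab near_x0; apply/andP; split.
  apply: ub_le_sup; last by exists x0.
  exists (F x0 + K) => _ [w wab <-]; have := near_x0 w wab.
  by rewrite ler_norml => /andP[_ ?]; lra.
apply: ge_sup; first by exists (F x0), x0.
move=> _ [w wab <-]; have := near_x0 w wab.
by rewrite ler_norml => /andP[_ ?]; lra.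
Qed.

Lemma exists_factor_itv (c d x : R) : 0 <= c ->
  (0 <= d /\ 0 <= x <= c * d) \/ (d < 0 /\ c * d <= x <= 0) ->
  exists al, 0 <= al <= c /\ x = al * d.
Proof.
move=> c0 [[d0 /andP[x0 xc]]|[d0 /andP[cx x0]]].
  have [d_eq0|d_neq0] := eqVneq d 0.
    exists 0; split; first by rewrite lexx c0.
    by move: xc; rewrite d_eq0 mulr0 mul0r => xc; lra.
  have dp : 0 < d by rewrite lt_neqAle eq_sym d_neq0 d0.
  exists (x / d); split; last by rewrite mulrVK // unitfE.
  by rewrite divr_ge0 //= ler_pdivrMr.
exists (x / d); split; last by rewrite mulrVK // unitfE lt_eqF.
by rewrite ler_ndivlMr // mul0r x0 /= ler_ndivrMr // mulrC.
Qed.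

Lemma godunov_increments (fm fp : R -> R) (vv lam c N a b : R) :
  0 < lam -> 0 <= c ->
  (forall x y, `|x| <= N -> `|y| <= N ->
     lam * `|flux fm fp y vv - flux fm fp x vv| <= c * `|y - x|) ->
  `|a| <= N -> `|b| <= N ->
  exists al be, [/\ 0 <= al <= c, 0 <= be <= c,
    lam * (flux fm fp a vv - godunov fm fp a b vv) = al * (b - a) &
    lam * (flux fm fp b vv - godunov fm fp a b vv) = be * (b - a)].
Proof.
move=> lam0 c0 lip aN bN.
set F := fun w => flux fm fp w vv.
have itvN : forall l r w, `|l| <= N -> `|r| <= N -> w \in `[l, r] -> `|w| <= N.
  move=> l r w; rewrite in_itv /= !ler_norml => /andP[? ?] /andP[? ?] /andP[? ?].
  by apply/andP; split; lra.
have osc : forall l r x0, `|l| <= N -> `|r| <= N -> x0 \in `[l, r] ->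
    forall w, w \in `[l, r] -> `|F w - F x0| <= c * (r - l) / lam.
  move=> l r x0 lN rN x0lr w wlr.
  rewrite ler_pdivlMr // mulrC.
  apply: le_trans (lip _ _ (itvN _ _ _ lN rN x0lr) (itvN _ _ _ lN rN wlr)) _.
  apply: ler_wpM2l => //; move: x0lr wlr; rewrite !in_itv /= => /andP[? ?] /andP[? ?].
  by rewrite ler_norml; apply/andP; split; lra.
have scale : forall x y e, x <= y <= x + e / lam -> 0 <= lam * (y - x) <= e.
  move=> x y e /andP[xy ye]; rewrite mulr_ge0 ?subr_ge0 ?(ltW lam0) //=.
  by rewrite -ler_pdivlMl // mulrC lerBlDl.
rewrite /godunov; case: ifPn => [ab|].
  have aab : a \in `[a, b] by rewrite in_itv /= lexx ab.
  have bab : b \in `[a, b] by rewrite in_itv /= lexx ab andbT.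
  have /andP[h1 h2] := inf_image_itv_bounds aab (osc _ _ _ aN bN aab).
  have /andP[h3 h4] := inf_image_itv_bounds bab (osc _ _ _ aN bN bab).
  set G := inf _ in h1 h2 h3 h4 *.
  have [al [al_c alE]] : exists al, 0 <= al <= c /\ lam * (F a - G) = al * (b - a).
    apply: exists_factor_itv => //; left; split; first lra.
    by apply: scale; rewrite h2 /=; lra.
  have [be [be_c beE]] : exists be, 0 <= be <= c /\ lam * (F b - G) = be * (b - a).
    apply: exists_factor_itv => //; left; split; first lra.
    by apply: scale; rewrite h4 /=; lra.
  by exists al, be.
rewrite -ltNge => lt_ba; have ba := ltW lt_ba.
have aba : a \in `[b, a] by rewrite in_itv /= lexx ba.
have bba : b \in `[b, a] by rewrite in_itv /= lexx ba andbT.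
have /andP[h1 h2] := sup_image_itv_bounds aba (osc _ _ _ bN aN aba).
have /andP[h3 h4] := sup_image_itv_bounds bba (osc _ _ _ bN aN bba).
set G := sup _ in h1 h2 h3 h4 *.
have [al [al_c alE]] : exists al, 0 <= al <= c /\ lam * (F a - G) = al * (b - a).
  apply: exists_factor_itv => //; right; split; first lra.
  have /andP[u1 u2] : 0 <= lam * (G - F a) <= c * (a - b) by apply: scale; rewrite h1 h2.
  by rewrite -opprB mulrN; apply/andP; split; lra.
have [be [be_c beE]] : exists be, 0 <= be <= c /\ lam * (F b - G) = be * (b - a).
  apply: exists_factor_itv => //; right; split; first lra.
  have /andP[u1 u2] : 0 <= lam * (G - F b) <= c * (a - b) by apply: scale; rewrite h3 h4.
  by rewrite -opprB mulrN; apply/andP; split; lra.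
by exists al, be.
Qed.

End GodunovIncrements.

Section DiscreteVariation.
Variable R : realType.

Definition jump (w : int -> R) (j : int) : R := w (j + 1) - w j.

Definition dvar (w : int -> R) (m : int) (k : nat) : R :=
  \sum_(0 <= i < k) `|jump w (m + i%:Z)|.

Definition dTV (w : int -> R) : \bar R :=
  ereal_sup [set (dvar w mk.1 mk.2)%:E | mk in [set: int * nat]].

Lemma dvar_ge0 (w : int -> R) (m : int) (k : nat) : 0 <= dvar w m k.
Proof. by apply: sumr_ge0 => i _. Qed.

Lemma dvarS (w : int -> R) (m : int) (k : nat) :
  dvar w m k.+1 = dvar w m k + `|jump w (m + k%:Z)|.
Proof. by rewrite /dvar big_nat_recr. Qed.

Lemma dvar_widen (w : int -> R) (m : int) (k : nat) :
  dvar w (m - 1) k.+2 = `|jump w (m - 1)| + dvar w m k + `|jump w (m + k%:Z)|.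
Proof.
rewrite /dvar big_nat_recl // big_nat_recr //= addr0 addrA; congr (_ + _ + _).
  by apply: eq_bigr => i _; congr (`|jump w _|); lia.
by congr (`|jump w _|); lia.
Qed.

Lemma dvarD (w : int -> R) (m : int) (k1 k2 : nat) :
  dvar w m (k1 + k2) = dvar w m k1 + dvar w (m + k1%:Z) k2.
Proof.
elim: k2 => [|k2 IH]; first by rewrite addn0 [dvar _ _ 0]/dvar big_geq // addr0.
by rewrite addnS !dvarS IH -addrA; congr (_ + (_ + `|jump w _|)); lia.
Qed.

Lemma dvar_split (w : int -> R) (p q r : int) : p <= q -> q <= r ->
  dvar w p `|r - p|%N = dvar w p `|q - p|%N + dvar w q `|r - q|%N.
Proof.
move=> pq qr; have -> : `|r - p|%N = (`|q - p| + `|r - q|)%N by lia.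
by rewrite dvarD; congr (_ + dvar w _ _); lia.
Qed.

Lemma dist_le_dvar (w : int -> R) (m : int) (k : nat) :
  `|w (m + k%:Z) - w m| <= dvar w m k.
Proof.
elim: k => [|k IH]; first by rewrite addr0 subrr normr0 dvar_ge0.
rewrite dvarS; apply: le_trans (ler_distD (w (m + k%:Z)) _ _) _.
rewrite addrC; apply: lerD => //.
by rewrite /jump (_ : m + k%:Z + 1 = m + k.+1%:Z) //; lia.
Qed.

End DiscreteVariation.

Section IncrementalForm.
Variables (R : realType) (w w' al be : int -> R).
Hypothesis al_range : forall j, 0 <= al j <= 2^-1.
Hypothesis be_range : forall j, 0 <= be j <= 2^-1.
Hypothesis w'E : forall j, w' j = w j + al j * jump w j - be (j - 1) * jump w (j - 1).

Lemma jump_incremental (j : int) : jump w' j =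
  (1 - al j - be j) * jump w j + al (j + 1) * jump w (j + 1) + be (j - 1) * jump w (j - 1).
Proof.
rewrite /jump !w'E /jump (_ : j + 1 - 1 = j); last by lia.
by rewrite (_ : j - 1 + 1 = j); [ring | lia].
Qed.

Lemma incremental_dvar_le (m : int) (k : nat) : dvar w' m k <= dvar w (m - 1) k.+2.
Proof.
set A := fun j => al j * `|jump w j|.
set B := fun j => be j * `|jump w j|.
have pointwise j : `|jump w' j| <= `|jump w j| - (A j - A (j + 1)) - (B j - B (j - 1)).
  have /andP[? ?] := al_range j; have /andP[? ?] := be_range j.
  have /andP[al1 _] := al_range (j + 1); have /andP[be1 _] := be_range (j - 1).
  rewrite jump_incremental.
  apply: le_trans (ler_normD _ _) _; apply: le_trans (lerD (ler_normD _ _) (lexx _)) _.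
  rewrite !normrM (ger0_norm al1) (ger0_norm be1) ger0_norm; last lra.
  by rewrite /A /B; lra.
(* The [A] and [B] terms telescope; the boundary terms are absorbed by the
   two extra jumps of [dvar w (m - 1) k.+2]. *)
have telA : \sum_(0 <= i < k) (A (m + i%:Z) - A (m + i%:Z + 1)) = A m - A (m + k%:Z).
  rewrite [RHS](_ : _ = - A (m + k%:Z) - - A (m + 0%:Z)); last by rewrite addr0; ring.
  rewrite -(@telescope_sumr _ 0 k (fun i => - A (m + i%:Z))) //.
  by apply: eq_bigr => i _; rewrite opprK addrC; congr (- A _ + _); lia.
have telB : \sum_(0 <= i < k) (B (m + i%:Z) - B (m + i%:Z - 1))
    = B (m + k%:Z - 1) - B (m - 1).
  rewrite [RHS](_ : _ = B (m + k%:Z - 1) - B (m + 0%:Z - 1)); last by rewrite addr0.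
  rewrite -(@telescope_sumr _ 0 k (fun i => B (m + i%:Z - 1))) //.
  by apply: eq_bigr => i _; congr (B _ - _); lia.
have A_range j : 0 <= A j <= `|jump w j|.
  by have /andP[? ?] := al_range j; rewrite /A mulr_ge0 //= ler_piMl //; lra.
have B_range j : 0 <= B j <= `|jump w j|.
  by have /andP[? ?] := be_range j; rewrite /B mulr_ge0 //= ler_piMl //; lra.
rewrite dvar_widen /dvar.
apply: le_trans (ler_sum _ (fun i _ => pointwise (m + i%:Z))) _.
rewrite sumrB sumrB telA telB.
have /andP[? ?] := A_range m; have /andP[? ?] := A_range (m + k%:Z).
have /andP[? ?] := B_range (m - 1); have /andP[? ?] := B_range (m + k%:Z - 1).
set S := \sum_(_ <= _ < _) _; lra.
Qed.

Lemma incremental_dTV_le : (dTV w' <= dTV w)%E.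
Proof.
apply: ge_ereal_sup => _ [[m k] _ <-] /=.
apply: le_trans (_ : (dvar w (m - 1) k.+2)%:E <= _)%E.
  by rewrite lee_fin; exact: incremental_dvar_le.
by apply: ereal_sup_ubound; exists (m - 1, k.+2).
Qed.

Lemma incremental_norm_le (N : R) :
  (forall j, `|w j| <= N) -> forall j, `|w' j| <= N.
Proof.
move=> wN j.
have -> : w' j = (1 - al j - be (j - 1)) * w j + al j * w (j + 1)
                 + be (j - 1) * w (j - 1).
  by rewrite w'E /jump (_ : j - 1 + 1 = j); [ring | lia].
have /andP[al0 ?] := al_range j; have /andP[be0 ?] := be_range (j - 1).
apply: le_trans (ler_normD _ _) _; apply: le_trans (lerD (ler_normD _ _) (lexx _)) _.
rewrite !normrM (ger0_norm al0) (ger0_norm be0) ger0_norm; last lra.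
have e1 : al j * `|w (j + 1)| <= al j * N by rewrite ler_wpM2l.
have e2 : be (j - 1) * `|w (j - 1)| <= be (j - 1) * N by rewrite ler_wpM2l.
have e3 : (1 - al j - be (j - 1)) * `|w j| <= (1 - al j - be (j - 1)) * N.
  by rewrite ler_wpM2l //; lra.
lra.
Qed.

End IncrementalForm.

Section CellFunctions.
Variable R : realType.
Local Notation leb := (@lebesgue_measure R).

Definition cell (dx x : R) : int := Num.floor (x / dx + 2^-1).

Lemma xh_diff (dx : R) (j : int) : xh dx j - xh dx (j - 1) = dx.
Proof. by rewrite /xh intrD /=; ring. Qed.

Lemma xh_lt (dx : R) (j : int) : 0 < dx -> xh dx (j - 1) < xh dx j.
Proof. by move=> dx0; rewrite -subr_gt0 xh_diff. Qed.

Lemma cell_xh (dx x : R) (j : int) : 0 < dx ->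
  xh dx (j - 1) < x < xh dx j -> cell dx x = j.
Proof.
move=> dx0; rewrite /xh !intrD /= => /andP[lx xr]; apply: floor_def.
have e1 : j%:~R - 1 + 2^-1 < x / dx by rewrite ltr_pdivlMr.
have e2 : x / dx < j%:~R + 2^-1 by rewrite ltr_pdivrMr.
by apply/andP; split; lra.
Qed.

Lemma cell_homo (dx : R) : 0 < dx -> {homo cell dx : x y / x <= y}.
Proof.
by move=> dx0 x y xy; apply: le_floor; rewrite lerD2r ler_pM2r // invr_gt0.
Qed.

Lemma variation_cons (a b x : R) (f : R -> R) (s : seq R) :
  variation a b f (x :: s) = `|f x - f a| + variation x b f s.
Proof. by rewrite /variation big_nat_recl. Qed.

Lemma variation_comp_le (w : int -> R) (J : R -> int) : {homo J : x y / x <= y} ->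
  forall b s a, itv_partition a b s ->
  variation a b (w \o J) s <= dvar w (J a) `|J b - J a|%N.
Proof.
move=> Jh b; elim => [|x s IH] a.
  by move=> /itv_partition_nil ->; rewrite variation_nil dvar_ge0.
move=> axs; have [/andP[ax _] _] := axs.
have xb := itv_partition_le (itv_partition_cons axs).
rewrite variation_cons (dvar_split _ (Jh _ _ (ltW ax)) (Jh _ _ xb)).
apply: lerD; last exact: IH (itv_partition_cons axs).
have := dist_le_dvar w (J a) `|J x - J a|%N.
by rewrite (_ : J a + `|J x - J a|%N = J x) //; have := Jh _ _ (ltW ax); lia.
Qed.

Lemma TV_pointwise_comp_le (w : int -> R) (J : R -> int) :
  {homo J : x y / x <= y} -> (TV_pointwise (w \o J) <= dTV w)%E.
Proof.
move=> Jh; apply: ge_ereal_sup => _ [[a b] _ <-] /=.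
apply: ge_ereal_sup => _ [_ [s abs <-] <-].
apply: (@le_trans _ _ (dvar w (J a) `|J b - J a|%N)%:E).
  by rewrite lee_fin; exact: variation_comp_le abs.
by apply: ereal_sup_ubound; exists (J a, `|J b - J a|%N).
Qed.

Lemma total_variation_ge_sum (g : R -> R) (p : nat -> R) (k : nat) :
  (forall i, (i < k)%N -> p i <= p i.+1) ->
  p 0%N <= p k /\
  ((\sum_(0 <= i < k) `|g (p i.+1) - g (p i)|)%:E <= total_variation (p 0%N) (p k) g)%E.
Proof.
elim: k => [|k IH] p_homo.
  by split => //; rewrite big_geq // total_variationxx.
have [p0k tvk] := IH (fun i ik => p_homo i (leq_trans ik (leqnSn k))).
have pk := p_homo k (ltnSn k).
split; first exact: le_trans pk.
rewrite big_nat_recr //= (total_variationD _ p0k pk) EFinD.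
by apply: leeD => //; exact: total_variation_ge.
Qed.

Lemma exists_cell_point (dx : R) (g : R -> R) (w : int -> R) (j : int) : 0 < dx ->
  {ae leb, forall x, g x = w (cell dx x)} ->
  exists x, xh dx (j - 1) < x < xh dx j /\ g x = w j.
Proof.
move=> dx0 [A [mA A0 gwA]]; apply: contrapT => no_point.
have cellA : `]xh dx (j - 1), xh dx j[ `<=` A.
  move=> x xj; apply: gwA => /= gx; apply: no_point; exists x; split => //.
  by rewrite gx (cell_xh dx0 xj).
have le_A := le_measure leb (mem_set (measurable_itv `]xh dx (j - 1), xh dx j[))
  (mem_set mA) cellA.
have cell_measure :
    leb `]xh dx (j - 1), xh dx j[ = (xh dx j - xh dx (j - 1))%:E.
  by rewrite lebesgue_measure_itv /= lte_fin xh_lt.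
have : ((xh dx j - xh dx (j - 1))%:E <= 0)%E by rewrite -cell_measure -A0.
by rewrite lee_fin xh_diff; lra.
Qed.

Lemma dTV_le_TV_pointwise (dx : R) (g : R -> R) (w : int -> R) : 0 < dx ->
  {ae leb, forall x, g x = w (cell dx x)} -> (dTV w <= TV_pointwise g)%E.
Proof.
move=> dx0 gw; apply: ge_ereal_sup => _ [[m k] _ <-] /=.
have [p pm] := choice (fun i : nat => exists_cell_point (m + i%:Z) dx0 gw).
have p_homo : forall i, (i < k)%N -> p i <= p i.+1.
  move=> i _; have [/andP[_ pi] _] := pm i; have [/andP[pi1 _] _] := pm i.+1.
  apply/ltW; apply: lt_trans pi _; apply: le_lt_trans pi1.
  by rewrite (_ : m + i.+1%:Z - 1 = m + i%:Z) //; lia.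
have [_ tv] := total_variation_ge_sum g p_homo.
have -> : dvar w m k = \sum_(0 <= i < k) `|g (p i.+1) - g (p i)|.
  apply: eq_bigr => i _; have [_ ->] := pm i; have [_ ->] := pm i.+1.
  by rewrite /jump (_ : m + i%:Z + 1 = m + i.+1%:Z) //; lia.
apply: le_trans tv _.
by apply: ereal_sup_ubound; exists (p 0%N, p k).
Qed.

Lemma TV_cell_function (dx : R) (w : int -> R) : 0 < dx ->
  TV (w \o cell dx) = dTV w.
Proof.
move=> dx0; apply/eqP; rewrite eq_le; apply/andP; split.
  apply: le_trans (TV_pointwise_comp_le w (cell_homo dx0)).
  by apply: ereal_inf_lbound; exists (w \o cell dx) => //; apply: aeW.
apply: le_ereal_inf_tmp => _ [g gw <-].
exact: dTV_le_TV_pointwise dx0 gw.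
Qed.

End CellFunctions.

Section CellAverages.
Variable R : realType.
Local Notation leb := (@lebesgue_measure R).

Lemma lebesgue_itv_cc (l r : R) : l < r -> leb `[l, r] = (r - l)%:E.
Proof. by move=> lr; rewrite lebesgue_measure_itv /= lte_fin lr. Qed.

Lemma integral_itv_cst (l r c : R) : l < r ->
  (\int[leb]_(x in `[l, r]) (fun _ => c%:E) x = (c * (r - l))%:E)%E.
Proof.
move=> lr; rewrite (integral_cst leb (measurable_itv _) c%:E).
set X := (X in (_ * X)%E).
by rewrite (_ : X = (r - l)%:E) //; exact: lebesgue_itv_cc.
Qed.

Lemma integrable_itv_bounded (f : R -> R) (M l r : R) : l < r ->
  measurable_fun [set: R] f -> {ae leb, forall x, `|f x| <= M} ->
  leb.-integrable `[l, r] (EFin \o f).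
Proof.
move=> lr mf fM; apply/integrableP; split.
  by apply/measurable_realfun.measurable_EFinP; exact: measurable_funS mf.
apply: (@le_lt_trans _ _ (\int[leb]_(x in `[l, r]) (fun _ => `|M|%:E) x)%E).
  apply: ae_ge0_le_integral => //.
    apply/(measurable_realfun.measurable_EFinP _ (Num.norm \o f)).
    by apply: measurableT_comp => //; exact: measurable_funS mf.
  case: fM => A [mA A0 fMA]; exists A; split => // x nfx; apply: fMA => fx; apply: nfx.
  by move=> _ /=; rewrite lee_fin; apply: le_trans fx _; exact: ler_norm.
by rewrite integral_itv_cst // ltry.
Qed.

Lemma integrable_itv_cst (l r c : R) : l < r -> leb.-integrable `[l, r] (fun _ => c%:E).
Proof.
by move=> lr; apply: (@integrable_itv_bounded (fun _ => c) `|c|) => //; apply: aeW.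
Qed.

Section NullSet.
Variables (f : R -> R) (l r c : R) (A : set (measurableTypeR R)).
Hypotheses (lr : l < r) (mA : measurable A) (A0 : leb A = 0)
  (f_int : leb.-integrable `[l, r] (EFin \o f)).

Let mI : measurable (`[l, r] : set (measurableTypeR R)) := measurable_itv _.
Let mIA : measurable ((`[l, r] : set (measurableTypeR R)) `\` A) :=
  measurableD mI mA.

Lemma Rintegral_ge_cst : (forall y, y \in `[l, r] -> ~ A y -> c <= f y) ->
  c * (r - l) <= Rintegral leb `[l, r] f.
Proof.
move=> cf; have c_int := integrable_itv_cst c lr.
have le_int : (\int[leb]_(x in `[l, r] `\` A) (fun _ => c%:E) x <=
               \int[leb]_(x in `[l, r] `\` A) (EFin \o f) x)%E.
  apply: le_integral => //.
  - by apply: (integrableS mI mIA _ c_int) => x [].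
  - by apply: (integrableS mI mIA _ f_int) => x [].
  - by move=> y /set_mem [yI yA]; rewrite /= lee_fin; apply: cf => //; exact: mem_set.
rewrite -lee_fin /Rintegral fineK ?(integrable_fin_num mI f_int) //.
by rewrite -integral_itv_cst // (negligible_integral mA mI c_int A0)
  (negligible_integral mA mI f_int A0).
Qed.

Lemma Rintegral_le_cst : (forall y, y \in `[l, r] -> ~ A y -> f y <= c) ->
  Rintegral leb `[l, r] f <= c * (r - l).
Proof.
move=> fc; have c_int := integrable_itv_cst c lr.
have le_int : (\int[leb]_(x in `[l, r] `\` A) (EFin \o f) x <=
               \int[leb]_(x in `[l, r] `\` A) (fun _ => c%:E) x)%E.
  apply: le_integral => //.
  - by apply: (integrableS mI mIA _ f_int) => x [].
  - by apply: (integrableS mI mIA _ c_int) => x [].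
  - by move=> y /set_mem [yI yA]; rewrite /= lee_fin; apply: fc => //; exact: mem_set.
rewrite -lee_fin /Rintegral fineK ?(integrable_fin_num mI f_int) //.
by rewrite -integral_itv_cst // (negligible_integral mA mI c_int A0)
  (negligible_integral mA mI f_int A0).
Qed.

End NullSet.

Section NearAverage.
Variables (f : R -> R) (l r dl : R) (A : set (measurableTypeR R)).
Hypotheses (lr : l < r) (mA : measurable A) (A0 : leb A = 0)
  (f_int : leb.-integrable `[l, r] (EFin \o f)) (dl0 : 0 < dl).
Local Notation a := ((r - l)^-1 * Rintegral leb `[l, r] f).

Lemma exists_le_avg : exists y, [/\ y \in `[l, r], ~ A y & f y <= a + dl].
Proof.
apply: contrapT => none.
have : (r - l) * (a + dl) <= Rintegral leb `[l, r] f.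
  rewrite mulrC; apply: (Rintegral_ge_cst lr mA A0 f_int) => y yI yA.
  rewrite leNgt; apply/negP => fy.
  by apply: none; exists y; split => //; exact: ltW.
by rewrite -ler_pdivlMl ?subr_gt0 // gerDl leNgt dl0.
Qed.

Lemma exists_ge_avg : exists y, [/\ y \in `[l, r], ~ A y & a - dl <= f y].
Proof.
apply: contrapT => none.
have : Rintegral leb `[l, r] f <= (r - l) * (a - dl).
  rewrite mulrC; apply: (Rintegral_le_cst lr mA A0 f_int) => y yI yA.
  rewrite leNgt; apply/negP => fy.
  by apply: none; exists y; split => //; exact: ltW.
by rewrite -ler_pdivrMl ?subr_gt0 // lerBrDr gerDl leNgt dl0.
Qed.

Lemma exists_ordered_near_avg : exists p q, [/\ p \in `[l, r], q \in `[l, r], p <= q,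
  ~ A p /\ ~ A q &
  (f p <= a + dl /\ a - dl <= f q) \/ (f q <= a + dl /\ a - dl <= f p)].
Proof.
have [y [yI yA fy]] := exists_le_avg; have [z [zI zA fz]] := exists_ge_avg.
have [yz|zy] := lerP y z.
  by exists y, z; split => //; left.
by exists z, y; split => //; [exact: ltW | right].
Qed.

End NearAverage.

Lemma avg_in_bounds (f : R -> R) (P : R -> Prop) (l r lo hi M : R) : l < r ->
  measurable_fun [set: R] f -> {ae leb, forall x, `|f x| <= M} ->
  {ae leb, forall x, P x} -> (forall x, P x -> lo <= f x <= hi) ->
  lo <= (r - l)^-1 * Rintegral leb `[l, r] f <= hi.
Proof.
move=> lr mf fM [A [mA A0 PA]] Pf.
have f_int := integrable_itv_bounded lr mf fM.
have f_bnd y : ~ A y -> lo <= f y <= hi.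
  by move=> yA; apply: Pf; apply: contrapT => nPy; apply: yA; apply: PA.
set a := (r - l)^-1 * _; apply/andP; split.
  rewrite leNgt; apply/negP => alo.
  have dl0 : 0 < (lo - a) / 2 by rewrite divr_gt0 // subr_gt0.
  have [y [_ yA fy]] := exists_le_avg lr mA A0 f_int dl0.
  rewrite -/a in fy; by have /andP[? _] := f_bnd y yA; lra.
rewrite leNgt; apply/negP => ahi.
have dl0 : 0 < (a - hi) / 2 by rewrite divr_gt0 // subr_gt0.
have [y [_ yA fy]] := exists_ge_avg lr mA A0 f_int dl0.
rewrite -/a in fy; by have /andP[_ ?] := f_bnd y yA; lra.
Qed.

End CellAverages.

Section InitialVariation.
Variable R : realType.
Local Notation leb := (@lebesgue_measure R).

Lemma dist_detour_le (p q a d : R) : 0 <= d ->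
  (p <= a + d /\ a - d <= q) \/ (q <= a + d /\ a - d <= p) ->
  `|q - a| + `|a - p| <= `|q - p| + 2 * d.
Proof.
move=> d0 near_a.
have [h1|h1] := lerP 0 (q - a); have [h2|h2] := lerP 0 (a - p);
have [h3|h3] := lerP 0 (q - p);
rewrite ?(ger0_norm h1) ?(ltr0_norm h1) ?(ger0_norm h2) ?(ltr0_norm h2)
  ?(ger0_norm h3) ?(ltr0_norm h3); case: near_a => [[? ?]|[? ?]]; lra.
Qed.

Lemma total_variation_ge_zigzag (g : R -> R) (u u' : nat -> R) (k : nat) :
  (forall i, (i <= k)%N -> u i <= u' i) -> (forall i, (i < k)%N -> u' i <= u i.+1) ->
  u 0%N <= u' k /\
  ((\sum_(0 <= i < k) `|g (u i.+1) - g (u' i)|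
    + \sum_(0 <= i < k.+1) `|g (u' i) - g (u i)|)%:E
    <= total_variation (u 0%N) (u' k) g)%E.
Proof.
elim: k => [|k IH] uu' u'u.
  have u0 := uu' 0%N (leqnn 0).
  split => //; rewrite big_geq // add0r big_nat1.
  exact: total_variation_ge.
have [u0k tvk] := IH (fun i ik => uu' i (leq_trans ik (leqnSn k)))
                   (fun i ik => u'u i (leq_trans ik (leqnSn k))).
have u'k := u'u k (ltnSn k).
have uk1 := uu' k.+1 (leqnn _).
have u0k1 : u 0%N <= u k.+1 by exact: le_trans u0k u'k.
split; first exact: le_trans u0k1 uk1.
rewrite (total_variationD _ u0k1 uk1) (total_variationD _ u0k u'k).
rewrite big_nat_recr //= big_nat_recr //=.
rewrite (_ : forall x y z t : R, x + y + (z + t) = (x + z) + y + t); last by move=> *; ring.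
rewrite !EFinD; apply: leeD; last exact: total_variation_ge.
by apply: leeD => //; exact: total_variation_ge.
Qed.

Lemma sum_detour_le (a P Q : nat -> R) (d : R) (k : nat) :
  (forall i, `|Q i - a i| + `|a i - P i| <= `|Q i - P i| + 2 * d) ->
  \sum_(0 <= i < k) `|a i.+1 - a i| + `|Q k - a k| <=
  \sum_(0 <= i < k) `|P i.+1 - Q i| + \sum_(0 <= i < k.+1) `|Q i - P i|
    + 2 * d * k.+1%:R.
Proof.
move=> detour; elim: k => [|k IH].
  rewrite big_geq // add0r big_geq // add0r big_nat1 mulr1.
  by have := detour 0%N; have := normr_ge0 (a 0%N - P 0%N); lra.
rewrite big_nat_recr //= [X in _ <= X + _ + _]big_nat_recr //=.
rewrite [X in _ <= _ + X + _]big_nat_recr //=.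
have tri : `|a k.+1 - a k| <= `|a k.+1 - P k.+1| + `|P k.+1 - Q k| + `|Q k - a k|.
  apply: le_trans (ler_distD (P k.+1) _ _) _; rewrite -addrA lerD2l.
  exact: ler_distD.
have := detour k.+1; rewrite -[k.+2%:R]natr1 mulrDr mulr1; lra.
Qed.

(* Each cell average is approximated, up to [dl], by values of [g] at two
   ordered points of its cell; the variation of [g] along the resulting zigzag
   bounds the variation of the averages. *)
Lemma dvar_w_init_le_TV_pointwise (dx M : R) (w0 g : R -> R) (m : int) (k : nat) :
  0 < dx -> measurable_fun [set: R] w0 -> {ae leb, forall x, `|w0 x| <= M} ->
  {ae leb, forall x, g x = w0 x} ->
  ((dvar (w_init dx w0) m k)%:E <= TV_pointwise g)%E.
Proof.
move=> dx0 mw0 w0M [A [mA A0 gA]].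
set a := fun i : nat => w_init dx w0 (m + i%:Z).
have aE i : a i = (xh dx (m + i%:Z) - xh dx (m + i%:Z - 1))^-1 *
    Rintegral leb `[xh dx (m + i%:Z - 1), xh dx (m + i%:Z)] w0.
  by rewrite xh_diff.
have w0_int i : leb.-integrable `[xh dx (m + i%:Z - 1), xh dx (m + i%:Z)] (EFin \o w0).
  exact: integrable_itv_bounded (xh_lt _ dx0) mw0 w0M.
have gw0 y : ~ A y -> g y = w0 y.
  by move=> yA; apply: contrapT => gy; apply: yA; apply: gA.
apply/lee_addgt0Pr => e e0.
set dl := e / (2 * k.+1%:R).
have dl0 : 0 < dl by rewrite divr_gt0 // mulr_gt0.
have [p /choice [q pq]] := choice (fun i : nat =>
  exists_ordered_near_avg (xh_lt (m + i%:Z) dx0) mA A0 (w0_int i) dl0).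
have pq_le i : (i <= k)%N -> p i <= q i by have [] := pq i.
have qp_le i : (i < k)%N -> q i <= p i.+1.
  move=> _; have [_ + _ _ _] := pq i; have [+ _ _ _ _] := pq i.+1.
  rewrite !in_itv /= (_ : m + i.+1%:Z - 1 = m + i%:Z); last by lia.
  by move=> /andP[xp _] /andP[_ qx]; exact: le_trans qx xp.
have detour i : `|g (q i) - a i| + `|a i - g (p i)| <= `|g (q i) - g (p i)| + 2 * dl.
  have [_ _ _ [pA qA] near] := pq i.
  by apply: dist_detour_le; [exact: ltW | rewrite aE !gw0].
have dl_sum : 2 * dl * k.+1%:R = e.
  have k1_neq0 : k.+1%:R != 0 :> R by rewrite pnatr_eq0.
  by rewrite /dl; field; rewrite -natr1 addrC in k1_neq0.
have -> : dvar (w_init dx w0) m k = \sum_(0 <= i < k) `|a i.+1 - a i|.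
  apply: eq_bigr => i _; rewrite /jump /a.
  by rewrite (_ : m + i%:Z + 1 = m + i.+1%:Z) //; lia.
have [_ tv] := total_variation_ge_zigzag g pq_le qp_le.
apply: le_trans (_ : ((\sum_(0 <= i < k) `|g (p i.+1) - g (q i)| +
   \sum_(0 <= i < k.+1) `|g (q i) - g (p i)|) + e)%:E <= _)%E.
  rewrite lee_fin -dl_sum; apply: le_trans (sum_detour_le k detour).
  by rewrite lerDl.
rewrite EFinD; apply: leeD => //; apply: le_trans tv _.
by apply: ereal_sup_ubound; exists (p 0%N, q k).
Qed.

Lemma dTV_w_init_le_TV (dx M : R) (w0 : R -> R) :
  0 < dx -> measurable_fun [set: R] w0 -> {ae leb, forall x, `|w0 x| <= M} ->
  (dTV (w_init dx w0) <= TV w0)%E.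
Proof.
move=> dx0 mw0 w0M; apply: le_ereal_inf_tmp => _ [g gw0 <-].
apply: ge_ereal_sup => _ [[m k] _ <-].
exact: dvar_w_init_le_TV_pointwise dx0 mw0 w0M gw0.
Qed.

End InitialVariation.

Section Scheme.
Variable R : realType.
Local Notation leb := (@lebesgue_measure R).

Lemma vh_itv01 (dx : R) (v : R -> R) : 0 < dx -> Linfty v ->
  {ae leb, forall x, 0 <= v x <= 1} -> forall j, 0 <= vh dx v j <= 1.
Proof.
move=> dx0 [mv [M vM]] v01 j.
have xc_diff : xc dx (j + 1) - xc dx j = dx by rewrite /xc intrD /=; ring.
have xc_lt : xc dx j < xc dx (j + 1) by rewrite -subr_gt0 xc_diff.
have := avg_in_bounds xc_lt mv vM v01 (fun x (vx : 0 <= v x <= 1) => vx).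
by rewrite xc_diff.
Qed.

Lemma w_init_bounded (dx : R) (w0 : R -> R) : 0 < dx -> Linfty w0 ->
  forall j, `|w_init dx w0 j| <= Linfty_norm w0.
Proof.
move=> dx0 [mw0 [M w0M]] j; apply: lb_le_inf; first by exists M.
move=> K w0K; rewrite ler_norml.
have w0_range x : `|w0 x| <= K -> - K <= w0 x <= K by rewrite ler_norml.
have := avg_in_bounds (xh_lt j dx0) mw0 w0M w0K w0_range.
by rewrite xh_diff.
Qed.

Lemma step_incremental (fm fp v : R -> R) (dt dx N : R) (w : int -> R) :
  0 < dt / dx -> (forall j, 0 <= vh dx v j <= 1) ->
  (forall vv, 0 <= vv <= 1 -> forall x y, `|x| <= N -> `|y| <= N ->
     dt / dx * `|flux fm fp y vv - flux fm fp x vv| <= 2^-1 * `|y - x|) ->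
  (forall j, `|w j| <= N) ->
  exists al be : int -> R, [/\ forall j, 0 <= al j <= 2^-1, forall j, 0 <= be j <= 2^-1 &
    forall j, step fm fp dt dx v w j = w j + al j * jump w j - be (j - 1) * jump w (j - 1)].
Proof.
move=> lam0 v01 lip wN.
have half_ge0 : 0 <= 2^-1 :> R by rewrite invr_ge0.
have [al /choice [be abE]] := choice (fun j =>
  godunov_increments lam0 half_ge0 (lip _ (v01 j)) (wN j) (wN (j + 1))).
exists al, be; split=> [j|j|j]; first by have [] := abE j.
  by have [] := abE j.
have [_ _ alE _] := abE j; have [_ _ _ beE] := abE (j - 1).
rewrite (_ : j - 1 + 1 = j) in beE; last by lia.
rewrite /step /jump (_ : j - 1 + 1 = j); last by lia.
by rewrite -alE -beE; ring.
Qed.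

End Scheme.

Unset Implicit Arguments.

Theorem theorem5p1 (R : realType) (fm fp : R -> R) (v w0 : R -> R)
    (dt dx eps : R) :
  (forall x, derivable fm x 1) -> (forall x, derivable (derive1 fm) x 1) ->
  (forall x, derivable fp x 1) -> (forall x, derivable (derive1 fp) x 1) ->
  Linfty v -> {ae (@lebesgue_measure R), forall x, 0 <= v x <= 1} ->
  Linfty w0 -> (TV w0 < +oo)%E ->
  0 < dt -> 0 < dx ->
  0 < eps < 2^-1 ->
  (forall w vv : R, `|w| <= Linfty_norm w0 -> 0 <= vv <= 1 ->
     dt / dx * `|derive1 (fun z => flux fm fp z vv) w| <= 2^-1 - eps) ->
  forall n : nat,
    (TV (w_dx fm fp dt dx v w0 n.+1) <= TV (w_dx fm fp dt dx v w0 n))%E /\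
    (TV (w_dx fm fp dt dx v w0 n) <= TV w0)%E.
Proof.
move=> dfm _ dfp _ v_inf v01 w0_inf _ dt0 dx0 /andP[eps_gt0 _] cfl.
have lam0 : 0 < dt / dx by rewrite divr_gt0.
have lip vv : 0 <= vv <= 1 -> forall x y, `|x| <= Linfty_norm w0 ->
    `|y| <= Linfty_norm w0 ->
    dt / dx * `|flux fm fp y vv - flux fm fp x vv| <= 2^-1 * `|y - x|.
  move=> vv01; apply: lipschitz_of_derive_bound => // [x|w wN].
    exact: flux_derivable.
  by apply: le_trans (cfl w vv wN vv01) _; lra.
have v01_cells := vh_itv01 dx0 v_inf v01.
set W := scheme fm fp dt dx v w0.
have W_bounded k j : `|W k j| <= Linfty_norm w0.
  elim: k j => [|k IH]; first exact: w_init_bounded.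
  have [al [be [al_r be_r WE]]] := step_incremental lam0 v01_cells lip IH.
  exact: (incremental_norm_le al_r be_r WE IH).
have dTV_dec k : (dTV (W k.+1) <= dTV (W k))%E.
  have [al [be [al_r be_r WE]]] := step_incremental lam0 v01_cells lip (W_bounded k).
  exact: (incremental_dTV_le al_r be_r WE).
have [mw0 [M w0M]] := w0_inf.
have W_cells k : w_dx fm fp dt dx v w0 k = W k \o cell dx by [].
move=> n; rewrite !W_cells !TV_cell_function //; split; first exact: dTV_dec.
elim: n => [|n IH]; first exact: dTV_w_init_le_TV dx0 mw0 w0M.
exact: le_trans (dTV_dec n) IH.
Qed.
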